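(* Let $d:\mathbb{Z}\to\mathbb{C}$ be bounded and let $J$ be the operator on $\ell^2(\mathbb{Z})$ given by $(Ju)(n)=u(n-1)+d(n)u(n)+u(n+1)$. If $J$ has a boundary eigenvalue with imaginary part $b$, then (i) for every $n\in\mathbb{Z}$, $\Im(d(n))=b$ or $\Im(d(n+1))=b$; (ii) every boundary eigenvalue of $J$ has imaginary part $b$.
   Context: The numerical range is $\operatorname{Num}(J)=\{\langle Ju,u\rangle:\|u\|=1\}$, and a boundary eigenvalue of $J$ is an eigenvalue of $J$ lying in the topological boundary of $\operatorname{Num}(J)$. *)

From Stdlib Require Import Reals ZArith.
Open Scope R_scope.

Record Cpx := mkC { Re : R ; Im : R }.

Definition Cadd (z w : Cpx) : Cpx := mkC (Re z + Re w) (Im z + Im w).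
Definition Cmul (z w : Cpx) : Cpx :=
  mkC (Re z * Re w - Im z * Im w) (Re z * Im w + Im z * Re w).
Definition Cconj (z : Cpx) : Cpx := mkC (Re z) (- Im z).
Definition Cscale (a : Cpx) (z : Cpx) : Cpx := Cmul a z.
Definition Cnorm2 (z : Cpx) : R := Re z * Re z + Im z * Im z.
Definition Cabs (z : Cpx) : R := sqrt (Cnorm2 z).
Definition Cdist (z w : Cpx) : R := sqrt ((Re z - Re w)^2 + (Im z - Im w)^2).

(* two-sided series over Z: sum_{n in Z} f n = l, via the symmetric
   partial sums  sum_{k=0}^{N} (f k + f (-k-1)). *)
Definition Zsum (f : Z -> R) (l : R) : Prop :=
  infinite_sum (fun k => f (Z.of_nat k) + f (- Z.of_nat k - 1)%Z) l.

Definition ZsumC (f : Z -> Cpx) (l : Cpx) : Prop :=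
  Zsum (fun n => Re (f n)) (Re l) /\ Zsum (fun n => Im (f n)) (Im l).

Definition in_l2 (u : Z -> Cpx) : Prop := exists s, Zsum (fun n => Cnorm2 (u n)) s.

Definition unit_l2 (u : Z -> Cpx) : Prop := Zsum (fun n => Cnorm2 (u n)) 1.

Definition inner_is (f g : Z -> Cpx) (z : Cpx) : Prop :=
  ZsumC (fun n => Cmul (f n) (Cconj (g n))) z.

Definition bounded_seq (d : Z -> Cpx) : Prop := exists M, forall n, Cabs (d n) <= M.

Definition Jop (d : Z -> Cpx) (u : Z -> Cpx) : Z -> Cpx :=
  fun n => Cadd (Cadd (u (n - 1)%Z) (Cmul (d n) (u n))) (u (n + 1)%Z).

Definition NumRange (d : Z -> Cpx) (z : Cpx) : Prop :=
  exists u, unit_l2 u /\ inner_is (Jop d u) u z.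

Definition closureC (S : Cpx -> Prop) (z : Cpx) : Prop :=
  forall eps, eps > 0 -> exists w, S w /\ Cdist z w < eps.
Definition interiorC (S : Cpx -> Prop) (z : Cpx) : Prop :=
  exists eps, eps > 0 /\ forall w, Cdist z w < eps -> S w.
Definition boundaryC (S : Cpx -> Prop) (z : Cpx) : Prop :=
  closureC S z /\ ~ interiorC S z.

Definition eigenvalue (d : Z -> Cpx) (lam : Cpx) : Prop :=
  exists u, in_l2 u /\ (exists n, u n <> mkC 0 0) /\
            forall n, Jop d u n = Cmul lam (u n).

Definition boundary_eigenvalue (d : Z -> Cpx) (lam : Cpx) : Prop :=
  eigenvalue d lam /\ boundaryC (NumRange d) lam.

From Stdlib Require Import Reals ZArith Lra Lia Psatz Classical.
Open Scope R_scope.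

(* Key fact: if [lam] is an eigenvalue with square-summable eigenvector [u]
   and [u n <> 0], then [Im (d n) = Im lam] unless [lam] is an interior
   point of Num(J).  Indeed, normalising [u] and perturbing it locally to
   [y = (1 - t conj (u n)) u + t e_n], one computes
     ||y||^2 = 1 + |t|^2 s,   <J y, y> = lam ||y||^2 + t a + |t|^2 c,
   with [a = 2 i (Im (d n) - Im lam) conj (u n)] non-zero; a fixed-point
   argument (intermediate value theorem) shows that the Rayleigh quotients
   [lam + (t a + |t|^2 c) / (1 + |t|^2 s)] fill a neighbourhood of [lam].
   Unique continuation for the three-term recurrence [J u = lam u] shows
   that [u] never vanishes at two consecutive sites, giving (i); and
   square-summability forces two consecutive non-zero entries [u n, u (n+1)],
   which pins down [Im mu] for every other boundary eigenvalue [mu], giving (ii). *)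

Lemma infinite_sum_cv s l : infinite_sum s l <-> Un_cv (fun N => sum_f_R0 s N) l.
Proof. reflexivity. Qed.

Lemma Zsum_ext f g l : (forall k, f k = g k) -> Zsum f l -> Zsum g l.
Proof.
  unfold Zsum. rewrite !infinite_sum_cv. intros E. apply Un_cv_ext.
  intro N. apply sum_eq. intros i _. now rewrite !E.
Qed.

Lemma Zsum_plus f g l1 l2 :
  Zsum f l1 -> Zsum g l2 -> Zsum (fun k => f k + g k) (l1 + l2).
Proof.
  unfold Zsum. rewrite !infinite_sum_cv. intros H1 H2.
  eapply Un_cv_ext; [|exact (CV_plus _ _ _ _ H1 H2)].
  intro N. simpl. rewrite <- plus_sum. apply sum_eq. intros i _. ring.
Qed.

Lemma Zsum_scal f l a : Zsum f l -> Zsum (fun k => a * f k) (a * l).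
Proof.
  unfold Zsum. rewrite !infinite_sum_cv. intro H.
  assert (Hc : Un_cv (fun _ : nat => a) a).
  { intros e He. exists 0%nat. intros. unfold R_dist. rewrite Rminus_diag, Rabs_R0. lra. }
  eapply Un_cv_ext; [|exact (CV_mult _ _ _ _ Hc H)].
  intro N. simpl. rewrite scal_sum. apply sum_eq. intros i _. ring.
Qed.

Lemma infinite_sum_delta (K : nat) b :
  infinite_sum (fun j => if Nat.eq_dec j K then b else 0) b.
Proof.
  assert (Hpart : forall N, (K <= N)%nat ->
            sum_f_R0 (fun j => if Nat.eq_dec j K then b else 0) N = b).
  { assert (Hlow : forall N, (N < K)%nat ->
              sum_f_R0 (fun j => if Nat.eq_dec j K then b else 0) N = 0).
    { induction N as [|N IH]; intro HN.
      - cbn [sum_f_R0]. destruct (Nat.eq_dec 0 K); [lia | reflexivity].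
      - rewrite tech5, IH by lia. destruct (Nat.eq_dec (S N) K); [lia | ring]. }
    induction N as [|N IH]; intro HN.
    - cbn [sum_f_R0]. destruct (Nat.eq_dec 0 K); [reflexivity | lia].
    - rewrite tech5. destruct (Nat.eq_dec (S N) K) as [e|e].
      + rewrite Hlow by lia. ring.
      + rewrite IH by lia. ring. }
  intros eps He. exists K. intros N HN. rewrite Hpart by lia.
  unfold Rdist. rewrite Rminus_diag, Rabs_R0. lra.
Qed.

Lemma Zsum_delta (m : Z) (F : Z -> R) :
  Zsum (fun k => if Z.eq_dec k m then F k else 0) (F m).
Proof.
  unfold Zsum. rewrite infinite_sum_cv.
  set (K := if Z_le_dec 0 m then Z.to_nat m else Z.to_nat (- m - 1)).
  eapply Un_cv_ext; [|apply (infinite_sum_delta K (F m))].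
  intro N. apply sum_eq. intros j _. unfold K.
  destruct (Z_le_dec 0 m), (Nat.eq_dec j _) as [e|e],
    (Z.eq_dec (Z.of_nat j) m) as [e1|e1], (Z.eq_dec (- Z.of_nat j - 1) m) as [e2|e2];
    try lia; subst; try ring.
  all: first [rewrite e1 | rewrite e2]; ring.
Qed.

Lemma Zsum_update f g l m :
  Zsum f l -> (forall k, k <> m -> g k = f k) -> Zsum g (l + (g m - f m)).
Proof.
  intros H E.
  eapply Zsum_ext; [|exact (Zsum_plus _ _ _ _ H (Zsum_delta m (fun k => g k - f k)))].
  intro k. cbv beta. destruct (Z.eq_dec k m) as [->|ne]; [ring | rewrite (E k ne); ring].
Qed.

Lemma Zsum_window f g l m :
  Zsum f l -> (forall k, k <> (m - 1)%Z -> k <> m -> k <> (m + 1)%Z -> g k = f k) ->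
  Zsum g (l + (g (m - 1)%Z - f (m - 1)%Z) + (g m - f m) + (g (m + 1)%Z - f (m + 1)%Z)).
Proof.
  intros H E.
  set (h1 := fun k => if Z.eq_dec k (m - 1) then g k else f k).
  set (h2 := fun k => if Z.eq_dec k m then g k else h1 k).
  assert (E1 : forall k, k <> (m - 1)%Z -> h1 k = f k).
  { intros k ne. unfold h1. now destruct (Z.eq_dec k (m - 1)). }
  assert (E2 : forall k, k <> m -> h2 k = h1 k).
  { intros k ne. unfold h2. now destruct (Z.eq_dec k m). }
  assert (E3 : forall k, k <> (m + 1)%Z -> g k = h2 k).
  { intros k ne. unfold h2, h1.
    destruct (Z.eq_dec k m), (Z.eq_dec k (m - 1)); try (subst; reflexivity).
    apply E; assumption. }
  assert (Hg := Zsum_update h2 g _ (m + 1)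
                  (Zsum_update h1 h2 _ m (Zsum_update f h1 l (m - 1) H E1) E2) E3).
  unfold h2, h1 in Hg.
  destruct (Z.eq_dec (m - 1) (m - 1)), (Z.eq_dec m m), (Z.eq_dec m (m - 1)),
    (Z.eq_dec (m + 1) m), (Z.eq_dec (m + 1) (m - 1)); try lia.
  exact Hg.
Qed.

Lemma Zsum_term_le f l m : (forall k, 0 <= f k) -> Zsum f l -> f m <= l.
Proof.
  intros Hf H.
  set (h := fun k : nat => f (Z.of_nat k) + f (- Z.of_nat k - 1)%Z) in H.
  assert (Hh : forall k, 0 <= h k).
  { intro k. unfold h. generalize (Hf (Z.of_nat k)) (Hf (- Z.of_nat k - 1)%Z). lra. }
  assert (Hpart : forall K, f m <= h K -> f m <= l).
  { intros K HK. apply Rle_trans with (sum_f_R0 h K); [|exact (sum_incr h K l H Hh)].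
    destruct K as [|K]; [exact HK|]. rewrite tech5. generalize (cond_pos_sum h K Hh). lra. }
  destruct (Z_le_dec 0 m).
  - apply (Hpart (Z.to_nat m)). unfold h. rewrite Z2Nat.id by lia.
    generalize (Hf (- m - 1)%Z). lra.
  - apply (Hpart (Z.to_nat (- m - 1))). unfold h. rewrite Z2Nat.id by lia.
    replace (- (- m - 1) - 1)%Z with m by lia. generalize (Hf (- m - 1)%Z). lra.
Qed.

Lemma Zsum_constant_terms f l c :
  Zsum f l -> (forall k : nat, f (Z.of_nat k) + f (- Z.of_nat k - 1)%Z = c) -> c = 0.
Proof.
  intros H Hc. destruct (Req_dec c 0) as [|Hne]; [assumption|]. exfalso.
  destruct (H (Rabs c / 2)) as [N HN]. { generalize (Rabs_pos_lt c Hne). lra. }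
  generalize (HN N (le_n _)) (HN (S N) (le_S _ _ (le_n _))).
  rewrite tech5, Hc. unfold Rdist. set (x := sum_f_R0 _ N). intros h1 h2.
  assert (Rabs c <= Rabs (x + c - l) + Rabs (x - l)).
  { replace c with ((x + c - l) + - (x - l)) at 1 by ring.
    rewrite <- (Rabs_Ropp (x - l)). apply Rabs_triang. }
  lra.
Qed.

Definition C0 : Cpx := mkC 0 0.
Definition C1 : Cpx := mkC 1 0.
Definition Csub (z w : Cpx) : Cpx := mkC (Re z - Re w) (Im z - Im w).
Definition Csmul (c : R) (z : Cpx) : Cpx := mkC (c * Re z) (c * Im z).

Lemma Cpx_eq z w : Re z = Re w -> Im z = Im w -> z = w.
Proof. destruct z, w; simpl; intros; subst; reflexivity. Qed.

Lemma Cnorm2_nonneg z : 0 <= Cnorm2 z.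
Proof. unfold Cnorm2. nra. Qed.

Lemma Cnorm2_eq0 z : Cnorm2 z = 0 -> z = C0.
Proof. unfold Cnorm2. intro. apply Cpx_eq; simpl; nra. Qed.

Lemma Cnorm2_pos z : z <> C0 -> 0 < Cnorm2 z.
Proof.
  intro Hz. destruct (Cnorm2_nonneg z) as [|H0]; [assumption|].
  exfalso. exact (Hz (Cnorm2_eq0 z (eq_sym H0))).
Qed.

Lemma Cnorm2_Csmul c z : Cnorm2 (Csmul c z) = c * c * Cnorm2 z.
Proof. unfold Cnorm2, Csmul. simpl. ring. Qed.

Definition eigen_eq (d : Z -> Cpx) (lam : Cpx) (u : Z -> Cpx) : Prop :=
  forall k, Jop d u k = Cmul lam (u k).

Lemma eigen_next d lam u k : Jop d u k = Cmul lam (u k) ->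
  Re (u (k + 1)%Z) = (Re lam - Re (d k)) * Re (u k) - (Im lam - Im (d k)) * Im (u k)
                     - Re (u (k - 1)%Z) /\
  Im (u (k + 1)%Z) = (Re lam - Re (d k)) * Im (u k) + (Im lam - Im (d k)) * Re (u k)
                     - Im (u (k - 1)%Z).
Proof.
  intro H. split; [apply (f_equal Re) in H | apply (f_equal Im) in H];
    unfold Jop in H; simpl in H; lra.
Qed.

Lemma eigen_reflect d lam u :
  eigen_eq d lam u -> eigen_eq (fun k => d (- k)%Z) lam (fun k => u (- k)%Z).
Proof.
  intros E k. rewrite <- (E (- k)%Z). unfold Jop.
  replace (- (k - 1))%Z with (- k + 1)%Z by lia.
  replace (- (k + 1))%Z with (- k - 1)%Z by lia.
  apply Cpx_eq; simpl; ring.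
Qed.

Lemma zeros_propagate_right d lam u n : eigen_eq d lam u ->
  u n = C0 -> u (n + 1)%Z = C0 -> forall k, (n <= k)%Z -> u k = C0.
Proof.
  intros E H0 H1.
  assert (Hj : forall j : nat, u (n + Z.of_nat j)%Z = C0 /\ u (n + Z.of_nat j + 1)%Z = C0).
  { induction j as [|j [IH0 IH1]].
    - rewrite Z.add_0_r. auto.
    - rewrite Nat2Z.inj_succ, <- Z.add_1_r, Z.add_assoc. split; [exact IH1|].
      set (m := (n + Z.of_nat j + 1)%Z) in *.
      destruct (eigen_next d lam u m (E m)) as [er ei].
      replace (m - 1)%Z with (n + Z.of_nat j)%Z in er, ei by (unfold m; lia).
      rewrite IH0, IH1 in er, ei. simpl in er, ei.
      apply Cpx_eq; simpl; lra. }
  intros k Hk. destruct (Hj (Z.to_nat (k - n))) as [H _].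
  rewrite Z2Nat.id in H by lia. now replace (n + (k - n))%Z with k in H by lia.
Qed.

Lemma consecutive_zeros d lam u n : eigen_eq d lam u ->
  u n = C0 -> u (n + 1)%Z = C0 -> forall k, u k = C0.
Proof.
  intros E H0 H1 k. destruct (Z_le_dec n k) as [Hk|Hk].
  - exact (zeros_propagate_right d lam u n E H0 H1 k Hk).
  - assert (Hr := zeros_propagate_right _ _ _ (- n - 1) (eigen_reflect d lam u E)).
    cbv beta in Hr.
    replace (- (- n - 1))%Z with (n + 1)%Z in Hr by lia.
    replace (- (- n - 1 + 1))%Z with n in Hr by lia.
    specialize (Hr H1 H0 (- k)%Z ltac:(lia)). now rewrite Z.opp_involutive in Hr.
Qed.

Lemma eigvec_one_of_two d lam u n : eigen_eq d lam u -> (exists m, u m <> C0) ->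
  u n <> C0 \/ u (n + 1)%Z <> C0.
Proof.
  intros E [m Hm]. apply NNPP. intros H. apply Hm.
  apply (consecutive_zeros d lam u n E); apply NNPP; intro; apply H; auto.
Qed.

Lemma period2_symmetric_terms (f : Z -> R) : (forall k, f (k + 2)%Z = f k) ->
  forall j : nat, f (Z.of_nat j) + f (- Z.of_nat j - 1)%Z = f 0%Z + f 1%Z.
Proof.
  intros Hper.
  assert (Hshift : forall (i : nat) a, f (a + 2 * Z.of_nat i)%Z = f a).
  { induction i as [|i IH]; intro a.
    - now rewrite Z.mul_0_r, Z.add_0_r.
    - replace (a + 2 * Z.of_nat (S i))%Z with (a + 2 * Z.of_nat i + 2)%Z by lia.
      now rewrite Hper. }
  intro j. replace (f (- Z.of_nat j - 1)%Z) with (f (Z.of_nat j + 1)%Z).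
  2:{ rewrite <- (Hshift (S j) (- Z.of_nat j - 1)%Z). f_equal. lia. }
  induction j as [|j IH]; [reflexivity|].
  rewrite <- IH, Nat2Z.inj_succ, <- Z.add_1_r.
  replace (Z.of_nat j + 1 + 1)%Z with (Z.of_nat j + 2)%Z by lia. rewrite Hper. ring.
Qed.

(* If an eigenvector never has two consecutive non-zero entries, then
   [u (k+2) = - u k] wherever [u (k+1) = 0], so [|u|^2] has period 2. *)
Lemma sparse_eigvec_period2 d lam u : eigen_eq d lam u ->
  (forall n, u n = C0 \/ u (n + 1)%Z = C0) ->
  forall k, Cnorm2 (u (k + 2)%Z) = Cnorm2 (u k).
Proof.
  intros E Hsparse k.
  assert (Hflip : u (k + 1)%Z = C0 -> Cnorm2 (u (k + 2)%Z) = Cnorm2 (u k)).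
  { intro h. destruct (eigen_next d lam u (k + 1) (E (k + 1)%Z)) as [er ei].
    replace (k + 1 + 1)%Z with (k + 2)%Z in er, ei by lia.
    replace (k + 1 - 1)%Z with k in er, ei by lia.
    rewrite h in er, ei. simpl in er, ei. unfold Cnorm2. rewrite er, ei. ring. }
  destruct (Hsparse (k + 1)%Z) as [h1|h2]; [exact (Hflip h1)|].
  destruct (Hsparse k) as [h0|h1]; [|exact (Hflip h1)].
  replace (k + 2)%Z with (k + 1 + 1)%Z by lia. now rewrite h0, h2.
Qed.

(* A square-summable non-zero eigenvector has two consecutive non-zero
   entries: otherwise the symmetric terms of the series [sum |u k|^2] would
   be a non-zero constant. *)
Lemma eigvec_consecutive_nonzero d lam u : in_l2 u -> eigen_eq d lam u ->
  (exists m, u m <> C0) -> exists n, u n <> C0 /\ u (n + 1)%Z <> C0.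
Proof.
  intros [S HS] E [m Hm]. apply NNPP. intro Hnot.
  assert (Hsparse : forall n, u n = C0 \/ u (n + 1)%Z = C0).
  { intro n. apply NNPP. intro H. apply Hnot. exists n.
    split; intro; apply H; auto. }
  set (f := fun k => Cnorm2 (u k)) in HS.
  assert (Hterms := period2_symmetric_terms f (sparse_eigvec_period2 d lam u E Hsparse)).
  assert (Hzero := Zsum_constant_terms f S _ HS Hterms).
  assert (Hf : forall k, 0 <= f k) by (intro; apply Cnorm2_nonneg).
  apply Hm, Cnorm2_eq0. fold (f m).
  destruct (Z_le_dec 0 m).
  - specialize (Hterms (Z.to_nat m)). rewrite Z2Nat.id in Hterms by lia.
    generalize (Hf m) (Hf (- m - 1)%Z). lra.
  - specialize (Hterms (Z.to_nat (- m - 1))). rewrite Z2Nat.id in Hterms by lia.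
    replace (- (- m - 1) - 1)%Z with m in Hterms by lia.
    generalize (Hf m) (Hf (- m - 1)%Z). lra.
Qed.

Lemma Jop_Csmul d c u k : Jop d (fun j => Csmul c (u j)) k = Csmul c (Jop d u k).
Proof. unfold Jop, Csmul. apply Cpx_eq; simpl; ring. Qed.

Lemma inv_sqrt_sq N : 0 < N -> / sqrt N * / sqrt N = / N.
Proof. intro HN. rewrite <- Rinv_mult, sqrt_sqrt by lra. reflexivity. Qed.

Lemma unit_l2_normalize y N : Zsum (fun k => Cnorm2 (y k)) N -> 0 < N ->
  unit_l2 (fun k => Csmul (/ sqrt N) (y k)).
Proof.
  intros Hy HN. unfold unit_l2.
  replace 1 with (/ sqrt N * / sqrt N * N) by (rewrite inv_sqrt_sq by lra; field; lra).
  eapply Zsum_ext; [|exact (Zsum_scal _ _ _ Hy)].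
  intro k. cbv beta. now rewrite Cnorm2_Csmul.
Qed.

Lemma eigvec_normalize d lam u n : in_l2 u -> eigen_eq d lam u -> u n <> C0 ->
  exists v, unit_l2 v /\ eigen_eq d lam v /\ v n <> C0.
Proof.
  intros [S HS] E Hn.
  assert (HSpos : 0 < S).
  { apply Rlt_le_trans with (Cnorm2 (u n)); [exact (Cnorm2_pos _ Hn)|].
    apply (Zsum_term_le (fun k => Cnorm2 (u k))); [intro; apply Cnorm2_nonneg | exact HS]. }
  exists (fun k => Csmul (/ sqrt S) (u k)). split; [|split].
  - exact (unit_l2_normalize u S HS HSpos).
  - intro k. rewrite Jop_Csmul, E. apply Cpx_eq; simpl; ring.
  - intro h. apply Hn, Cnorm2_eq0. apply (f_equal Cnorm2) in h.
    rewrite Cnorm2_Csmul, inv_sqrt_sq in h by lra.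
    unfold C0, Cnorm2 at 2 in h. simpl in h.
    apply Rmult_eq_reg_l with (/ S); [lra | apply Rinv_neq_0_compat; lra].
Qed.

Lemma numrange_rayleigh d y N w :
  Zsum (fun k => Cnorm2 (y k)) N -> 0 < N -> inner_is (Jop d y) y (Csmul N w) ->
  NumRange d w.
Proof.
  intros Hy HN [Hre Him]. set (c := / sqrt N).
  assert (Hc : c * c = / N) by exact (inv_sqrt_sq N HN).
  exists (fun k => Csmul c (y k)). split; [exact (unit_l2_normalize y N Hy HN)|].
  split.
  - replace (Re w) with (c * c * Re (Csmul N w)) by (simpl; rewrite Hc; field; lra).
    eapply Zsum_ext; [|exact (Zsum_scal _ _ _ Hre)].
    intro k. cbv beta. rewrite Jop_Csmul. unfold Csmul, Cmul, Cconj. simpl. ring.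
  - replace (Im w) with (c * c * Im (Csmul N w)) by (simpl; rewrite Hc; field; lra).
    eapply Zsum_ext; [|exact (Zsum_scal _ _ _ Him)].
    intro k. cbv beta. rewrite Jop_Csmul. unfold Csmul, Cmul, Cconj. simpl. ring.
Qed.

Lemma Jop_lincomb d a b u v k :
  Jop d (fun j => Cadd (Cmul a (u j)) (Cmul b (v j))) k =
  Cadd (Cmul a (Jop d u k)) (Cmul b (Jop d v k)).
Proof. unfold Jop. apply Cpx_eq; simpl; ring. Qed.

Definition unitvec (n k : Z) : Cpx := if Z.eq_dec k n then C1 else C0.

(* The local perturbation [y = al u + t e_n] of [u], where the coefficient
   [al = 1 - t conj (u n)] makes [||y||^2 = 1 + |t|^2 (1 - |u n|^2)]. *)
Definition bump_coef (t un : Cpx) : Cpx := Csub C1 (Cmul t (Cconj un)).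

Definition bump (u : Z -> Cpx) (n : Z) (t : Cpx) : Z -> Cpx :=
  fun k => Cadd (Cmul (bump_coef t (u n)) (u k)) (Cmul t (unitvec n k)).

Lemma Jop_bump d lam u n t k : eigen_eq d lam u ->
  Jop d (bump u n t) k =
  Cadd (Cmul (bump_coef t (u n)) (Cmul lam (u k))) (Cmul t (Jop d (unitvec n) k)).
Proof. intro E. unfold bump. now rewrite Jop_lincomb, E. Qed.

Lemma bump_off u n t k : k <> n -> bump u n t k = Cmul (bump_coef t (u n)) (u k).
Proof.
  intro ne. unfold bump, unitvec. destruct (Z.eq_dec k n); [contradiction|].
  apply Cpx_eq; simpl; ring.
Qed.

Lemma Jop_bump_off d lam u n t k : eigen_eq d lam u ->
  k <> (n - 1)%Z -> k <> n -> k <> (n + 1)%Z ->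
  Jop d (bump u n t) k = Cmul (bump_coef t (u n)) (Cmul lam (u k)).
Proof.
  intros E h1 h2 h3. rewrite (Jop_bump d lam u n t k E).
  unfold Jop, unitvec.
  destruct (Z.eq_dec (k - 1) n), (Z.eq_dec k n), (Z.eq_dec (k + 1) n); try lia.
  apply Cpx_eq; simpl; ring.
Qed.

Lemma ZsumC_window f g l m :
  ZsumC f l -> (forall k, k <> (m - 1)%Z -> k <> m -> k <> (m + 1)%Z -> g k = f k) ->
  ZsumC g (Cadd (Cadd (Cadd l (Csub (g (m - 1)%Z) (f (m - 1)%Z)))
                      (Csub (g m) (f m))) (Csub (g (m + 1)%Z) (f (m + 1)%Z))).
Proof.
  intros [Hre Him] E. split.
  - apply (Zsum_window (fun k => Re (f k)) (fun k => Re (g k)) _ m Hre).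
    intros k h1 h2 h3. now rewrite E.
  - apply (Zsum_window (fun k => Im (f k)) (fun k => Im (g k)) _ m Him).
    intros k h1 h2 h3. now rewrite E.
Qed.

Lemma ZsumC_val f l l' : ZsumC f l -> l = l' -> ZsumC f l'.
Proof. now intros H <-. Qed.

Lemma bump_norm u n t : unit_l2 u ->
  Zsum (fun k => Cnorm2 (bump u n t k)) (1 + Cnorm2 t * (1 - Cnorm2 (u n))).
Proof.
  intro Hu. set (al := bump_coef t (u n)).
  assert (H := Zsum_update (fun k => Cnorm2 al * Cnorm2 (u k)) (fun k => Cnorm2 (bump u n t k))
                 _ n (Zsum_scal _ _ (Cnorm2 al) Hu)).
  cbv beta in H. replace (1 + Cnorm2 t * (1 - Cnorm2 (u n))) with
    (Cnorm2 al * 1 + (Cnorm2 (bump u n t n) - Cnorm2 al * Cnorm2 (u n))).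
  - apply H. intros k ne. rewrite (bump_off u n t k ne). unfold Cnorm2. simpl. ring.
  - unfold al, bump, bump_coef, unitvec. destruct (Z.eq_dec n n); [|contradiction].
    unfold Cnorm2. simpl. ring.
Qed.

(* With [delta = Im (d n) - Im lam], the numerator [<J y, y>] of the Rayleigh
   quotient of the perturbation is [lam ||y||^2 + t a + |t|^2 c], where
   [a = 2 i delta conj (u n)] is [pert_lin] and [c] is [pert_quad]. *)
Definition pert_lin (dn lam un : Cpx) : Cpx :=
  mkC (2 * (Im dn - Im lam) * Im un) (2 * (Im dn - Im lam) * Re un).

Definition pert_quad (dn lam un : Cpx) : Cpx :=
  mkC (Re dn - Re lam) ((Im dn - Im lam) * (1 - 2 * Cnorm2 un)).

Lemma bump_inner d lam u n t : unit_l2 u -> eigen_eq d lam u ->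
  inner_is (Jop d (bump u n t)) (bump u n t)
    (Cadd (Cadd (Csmul (1 + Cnorm2 t * (1 - Cnorm2 (u n))) lam)
                (Cmul t (pert_lin (d n) lam (u n))))
          (Csmul (Cnorm2 t) (pert_quad (d n) lam (u n)))).
Proof.
  intros Hu E. set (al := bump_coef t (u n)).
  assert (Hbase : ZsumC (fun k => Csmul (Cnorm2 al * Cnorm2 (u k)) lam) (Csmul (Cnorm2 al) lam)).
  { split; simpl.
    - replace (Cnorm2 al * Re lam) with (Cnorm2 al * Re lam * 1) by ring.
      eapply Zsum_ext; [|exact (Zsum_scal _ _ (Cnorm2 al * Re lam) Hu)].
      intro k. simpl. ring.
    - replace (Cnorm2 al * Im lam) with (Cnorm2 al * Im lam * 1) by ring.
      eapply Zsum_ext; [|exact (Zsum_scal _ _ (Cnorm2 al * Im lam) Hu)].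
      intro k. simpl. ring. }
  eapply ZsumC_val.
  - apply (ZsumC_window _ (fun k => Cmul (Jop d (bump u n t) k) (Cconj (bump u n t k)))
             _ n Hbase).
    intros k h1 h2 h3. rewrite (Jop_bump_off d lam u n t k E h1 h2 h3), (bump_off u n t k h2).
    fold al. unfold Cnorm2. apply Cpx_eq; simpl; ring.
  - rewrite !(Jop_bump d lam u n t _ E).
    destruct (eigen_next d lam u n (E n)) as [er ei].
    unfold al, bump, bump_coef, unitvec, Jop.
    repeat (destruct (Z.eq_dec _ _); try (exfalso; lia)).
    apply Cpx_eq; unfold pert_lin, pert_quad, Cnorm2; simpl; rewrite er, ei; ring.
Qed.

Lemma Cmul_solve (a p : Cpx) (rho : R) : 0 < Cnorm2 a -> Cnorm2 p = rho * Cnorm2 a ->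
  exists t, Cnorm2 t = rho /\ Cmul t a = p.
Proof.
  intros Ha Hp.
  exists (mkC ((Re p * Re a + Im p * Im a) / Cnorm2 a) ((Im p * Re a - Re p * Im a) / Cnorm2 a)).
  unfold Cnorm2 in *. split.
  - replace rho with ((Re p * Re p + Im p * Im p) / (Re a * Re a + Im a * Im a))
      by (rewrite Hp; field; lra).
    simpl. field. lra.
  - apply Cpx_eq; simpl; field; lra.
Qed.

Lemma fixed_point_endpoint (nA s r : R) (z c : Cpx) :
  0 <= r -> r * (s * s + 2) <= 1 / 5 -> 2 * (r * r) * Cnorm2 c <= Cnorm2 z ->
  r * nA = 4 * Cnorm2 z ->
  Cnorm2 (Csub (Csmul (1 + r * s) z) (Csmul r c)) <= r * nA.
Proof.
  intros Hr Hrs Hrc HrA. rewrite HrA.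
  assert (Hs : - (1 / 5) <= r * s <= 1 / 5).
  { assert (0 <= r * (s * s - s + 2)) by (apply Rmult_le_pos; nra).
    assert (0 <= r * (s * s + s + 2)) by (apply Rmult_le_pos; nra).
    split; nra. }
  assert (Hq : (1 + r * s) * (1 + r * s) <= 36 / 25) by nra.
  assert (Hz := Cnorm2_nonneg z).
  unfold Cnorm2 in *. simpl.
  set (A := 1 + r * s) in *.
  pose proof (Rle_0_sqr (A * Re z + r * Re c)). pose proof (Rle_0_sqr (A * Im z + r * Im c)).
  unfold Rsqr in *. nra.
Qed.

Definition small_radius (nA s K : R) : R :=
  Rmin (nA / (20 * (s * s + 2))) (nA * nA / (32 * K + 1)).

Lemma small_radius_bounds (nA s K Z2 : R) : 0 < nA -> 0 <= K -> 0 <= Z2 ->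
  Z2 < small_radius nA s K ->
  (4 * Z2 / nA) * (s * s + 2) <= 1 / 5 /\ 2 * ((4 * Z2 / nA) * (4 * Z2 / nA)) * K <= Z2.
Proof.
  intros HA HK HZ2 Hz.
  assert (Hz1 : Z2 * (20 * (s * s + 2)) < nA).
  { apply Rlt_le_trans with (nA / (20 * (s * s + 2)) * (20 * (s * s + 2))).
    - apply Rmult_lt_compat_r; [nra|]. eapply Rlt_le_trans; [exact Hz | apply Rmin_l].
    - right. field. nra. }
  assert (Hz2 : Z2 * (32 * K + 1) < nA * nA).
  { apply Rlt_le_trans with (nA * nA / (32 * K + 1) * (32 * K + 1)).
    - apply Rmult_lt_compat_r; [nra|]. eapply Rlt_le_trans; [exact Hz | apply Rmin_r].
    - right. field. nra. }
  set (r := 4 * Z2 / nA).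
  assert (HrA : r * nA = 4 * Z2) by (unfold r; field; lra).
  split.
  - apply Rmult_le_reg_r with nA; [lra|].
    replace (r * (s * s + 2) * nA) with (r * nA * (s * s + 2)) by ring. rewrite HrA. nra.
  - apply Rmult_le_reg_r with (nA * nA); [nra|].
    replace (2 * (r * r) * K * (nA * nA)) with (2 * (r * nA) * (r * nA) * K) by ring.
    rewrite HrA. nra.
Qed.

(* For small [z], the equation [rho nA = |(1 + rho s) z - rho c|^2] has a
   solution [rho >= 0] with [1 + rho s > 0] (intermediate value theorem on
   [[0, 4 |z|^2 / nA]]). *)
Lemma fixed_point_small (nA s : R) (z c : Cpx) : 0 < nA ->
  Cnorm2 z < small_radius nA s (Cnorm2 c) ->
  exists rho, 0 <= rho /\ 0 < 1 + rho * s /\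
    Cnorm2 (Csub (Csmul (1 + rho * s) z) (Csmul rho c)) = rho * nA.
Proof.
  intros HA Hz.
  destruct (small_radius_bounds nA s _ _ HA (Cnorm2_nonneg c) (Cnorm2_nonneg z) Hz)
    as [Hrs Hrc].
  set (r := 4 * Cnorm2 z / nA) in *.
  assert (Hr : 0 <= r).
  { unfold r, Rdiv. apply Rmult_le_pos; [generalize (Cnorm2_nonneg z); lra|].
    left. apply Rinv_0_lt_compat. lra. }
  assert (HrA : r * nA = 4 * Cnorm2 z) by (unfold r; field; lra).
  set (phi := fun rho => Cnorm2 (Csub (Csmul (1 + rho * s) z) (Csmul rho c)) - rho * nA).
  assert (Hcont : continuity phi) by (unfold phi, Cnorm2, Csub, Csmul; simpl; reg).
  assert (Hphi0 : phi 0 = Cnorm2 z) by (unfold phi, Cnorm2; simpl; ring).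
  assert (Hphir : phi r <= 0).
  { unfold phi. pose proof (fixed_point_endpoint nA s r z c Hr Hrs Hrc HrA). lra. }
  destruct (IVT_cor phi 0 r Hcont Hr) as [rho [[Hrho0 Hrho1] Hroot]].
  { rewrite Hphi0. generalize (Cnorm2_nonneg z). nra. }
  exists rho. split; [exact Hrho0|]. split.
  - assert (rho * (s * s + 2) <= r * (s * s + 2)) by (apply Rmult_le_compat_r; nra).
    assert (0 <= rho * (s * s + s + 2)) by (apply Rmult_le_pos; nra).
    nra.
  - unfold phi in Hroot. lra.
Qed.

Lemma small_values_attained (a c : Cpx) (s : R) : 0 < Cnorm2 a ->
  exists del, 0 < del /\ forall z, Cnorm2 z < del ->
  exists t, 0 < 1 + Cnorm2 t * s /\
    Cmul t a = Csub (Csmul (1 + Cnorm2 t * s) z) (Csmul (Cnorm2 t) c).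
Proof.
  intro Ha. exists (small_radius (Cnorm2 a) s (Cnorm2 c)). split.
  { assert (Hc := Cnorm2_nonneg c).
    apply Rmin_pos; apply Rdiv_lt_0_compat; nra. }
  intros z Hz. destruct (fixed_point_small _ s z c Ha Hz) as [rho [_ [Hpos Hfix]]].
  destruct (Cmul_solve a _ rho Ha Hfix) as [t [Ht Hta]].
  exists t. rewrite Ht. split; assumption.
Qed.

(* Key step: if a unit eigenvector is non-zero at [n] and
   [Im (d n) <> Im lam], the Rayleigh quotients of the perturbations
   [bump u n t] cover a neighbourhood of [lam]. *)
Lemma unit_eigvec_interior d lam u n : unit_l2 u -> eigen_eq d lam u ->
  u n <> C0 -> Im (d n) <> Im lam -> interiorC (NumRange d) lam.
Proof.
  intros Hu E Hn Hd.
  set (a := pert_lin (d n) lam (u n)). set (c := pert_quad (d n) lam (u n)).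
  assert (Ha : 0 < Cnorm2 a).
  { assert (Hun := Cnorm2_pos _ Hn).
    assert (0 < (Im (d n) - Im lam) * (Im (d n) - Im lam)).
    { apply Rsqr_pos_lt. lra. }
    replace (Cnorm2 a) with (4 * ((Im (d n) - Im lam) * (Im (d n) - Im lam)) * Cnorm2 (u n))
      by (unfold a, pert_lin, Cnorm2; simpl; ring).
    nra. }
  destruct (small_values_attained a c (1 - Cnorm2 (u n)) Ha) as [del [Hdel Hsol]].
  exists (sqrt del). split; [apply sqrt_lt_R0; exact Hdel|].
  intros w Hw. set (z := Csub w lam).
  assert (Hz : Cnorm2 z < del).
  { apply sqrt_lt_0_alt. unfold Cdist in Hw. unfold z, Cnorm2. simpl.
    replace ((Re w - Re lam) * (Re w - Re lam) + (Im w - Im lam) * (Im w - Im lam))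
      with ((Re lam - Re w) ^ 2 + (Im lam - Im w) ^ 2) by ring.
    exact Hw. }
  destruct (Hsol z Hz) as [t [HN Ht]].
  apply (numrange_rayleigh d (bump u n t) _ w (bump_norm u n t Hu) HN).
  eapply ZsumC_val; [exact (bump_inner d lam u n t Hu E)|].
  fold a c. rewrite Ht. apply Cpx_eq; unfold z; simpl; ring.
Qed.

Lemma eigvec_support_Im d lam u n : in_l2 u -> eigen_eq d lam u ->
  ~ interiorC (NumRange d) lam -> u n <> C0 -> Im (d n) = Im lam.
Proof.
  intros Hl E Hni Hn. destruct (eigvec_normalize d lam u n Hl E Hn) as [v [Hv [Ev Hvn]]].
  destruct (Req_dec (Im (d n)) (Im lam)) as [h|h]; [exact h|].
  exfalso. exact (Hni (unit_eigvec_interior d lam v n Hv Ev Hvn h)).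
Qed.

(* (i) follows from unique continuation, (ii) from a pair of consecutive
   non-zero entries of one eigenvector. *)
Theorem mainTheorem8 (d : Z -> Cpx) (Hd : bounded_seq d) (lam : Cpx)
  (Hlam : boundary_eigenvalue d lam) :
  (forall n : Z, Im (d n) = Im lam \/ Im (d (n + 1)%Z) = Im lam) /\
  (forall mu : Cpx, boundary_eigenvalue d mu -> Im mu = Im lam).
Proof.
  destruct Hlam as [[u [Hu [Hnz E]]] [_ Hni]].
  split.
  - intro n. destruct (eigvec_one_of_two d lam u n E Hnz) as [h|h].
    + left. exact (eigvec_support_Im d lam u n Hu E Hni h).
    + right. exact (eigvec_support_Im d lam u (n + 1) Hu E Hni h).
  - intros mu [[v [Hv [Hvnz Ev]]] [_ Hvni]].
    destruct (eigvec_consecutive_nonzero d lam u Hu E Hnz) as [n [h0 h1]].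
    assert (H0 := eigvec_support_Im d lam u n Hu E Hni h0).
    assert (H1 := eigvec_support_Im d lam u (n + 1) Hu E Hni h1).
    destruct (eigvec_one_of_two d mu v n Ev Hvnz) as [h|h].
    + rewrite <- H0. exact (eq_sym (eigvec_support_Im d mu v n Hv Ev Hvni h)).
    + rewrite <- H1. exact (eq_sym (eigvec_support_Im d mu v (n + 1) Hv Ev Hvni h)).
Qed.
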